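(* Let $\varphi$ be a consistent family of foliage grafts for a nonincreasing foliage tree $\mathbf F$, and let $\mathbf H=\mathrm{fhybr}(\mathbf F,\varphi)$. Then: (a) $\mathbf H$ is nonincreasing; (b) if $\mathbf F$ and each $\mathbf G\in\varphi$ are splittable, then $\mathbf H$ is splittable; (c) if $\mathbf F$ and each $\mathbf G\in\varphi$ are locally strict, then $\mathbf H$ is locally strict; (d) if $\mathbf F$ is complete and splittable and each $\mathbf G\in\varphi$ has bounded chains, then $\mathbf H$ is complete; and if $\mathbf F$ has strict branches and is splittable and each $\mathbf G\in\varphi$ has bounded chains, then $\mathbf H$ has strict branches; (e) if $\mathbf F$ and each $\mathbf G\in\varphi$ are open in a space $X$, then $\mathbf H$ is open in the subspace $X\setminus\mathrm{loss}(\mathbf F,\varphi)$ of $X$.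
   Context: Trees: a tree is a pair $(Q,<)$ with $<$ irreflexive transitive and predecessor sets well-ordered; $\parallel$ = incomparable; $\mathrm{sons}(x)$ = immediate successors; $\max$ = maximal nodes; $0$ = least node; chain, branch (maximal chain); bounded chains: every nonempty chain has an upper bound node; $A{\downarrow}=\{v:\exists a\in A\ a\le v\}$; for an antichain $A$ and $x\in A{\downarrow}$, $\mathrm{root}(x,A)$ is the unique $r\in A$, $r\le x$. A graft for a tree $\mathcal T$ is a tree $\mathcal G$ with more than one node, least node $0_{\mathcal G}\in\mathrm{nodes}\,\mathcal T$, $\max\mathcal G\subseteq\{v\in\mathrm{nodes}\,\mathcal T:v>_{\mathcal T}0_{\mathcal G}\}$ an antichain in $\mathcal T$, and $\mathrm{impl}\,\mathcal G:=\mathrm{nodes}\,\mathcal G\setminus(\{0_{\mathcal G}\}\cup\max\mathcal G)$ disjoint from $\mathrm{nodes}\,\mathcal T$; $\mathrm{expl}(\mathcal T,\mathcal G)=\{v:v>_{\mathcal T}0_{\mathcal G}\}\setminus(\max\mathcal G){\downarrow}_{\mathcal T}$. A consistent family $\gamma$ of grafts for $\mathcal T$: members are grafts with pairwise disjoint implants and for distinct $\mathcal D,\mathcal E$: $0_{\mathcal D}\parallel_{\mathcal T}0_{\mathcal E}$ or $0_{\mathcal D}\in(\max\mathcal E){\downarrow}_{\mathcal T}$ or $0_{\mathcal E}\in(\max\mathcal D){\downarrow}_{\mathcal T}$. $\mathrm{supp}(\mathcal T,\gamma)=\mathrm{nodes}\,\mathcal T\setminus\bigcup_{\mathcal G\in\gamma}\mathrm{expl}(\mathcal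 T,\mathcal G)$. $\mathrm{hybr}(\mathcal T,\gamma)$ is the tree on $\mathrm{supp}(\mathcal T,\gamma)\cup\bigcup_{\mathcal G\in\gamma}\mathrm{impl}\,\mathcal G$ with $x<y$ iff: (b1) $x,y\in\mathrm{supp}$, $x<_{\mathcal T}y$; (b2) $x,y\in\mathrm{impl}\,\mathcal G$, $x<_{\mathcal G}y$; (b3) $x\in\mathrm{supp}$, $y\in\mathrm{impl}\,\mathcal G$, $x\le_{\mathcal T}0_{\mathcal G}$; (b4) $x\in\mathrm{impl}\,\mathcal G$, $y\in\mathrm{supp}\cap(\max\mathcal G){\downarrow}_{\mathcal T}$, $x<_{\mathcal G}\mathrm{root}_{\mathcal T}(y,\max\mathcal G)$; or (b5) $x\in\mathrm{impl}\,\mathcal D$, $y\in\mathrm{impl}\,\mathcal E$ ($\mathcal D\neq\mathcal E$), $0_{\mathcal E}\in(\max\mathcal D){\downarrow}_{\mathcal T}$, $x<_{\mathcal D}\mathrm{root}_{\mathcal T}(0_{\mathcal E},\max\mathcal D)$. Foliage trees: $\mathbf F=(\mathcal T,l)$ with $\mathcal T$ a tree (skeleton $\mathrm{skel}\,\mathbf F$) and leaves $\mathbf F_x=l(x)$; tree notions for $\mathbf F$ refer to the skeleton; $\mathrm{fruit}_{\mathbf F}(A)=\bigcap_{x\in A}\mathbf F_x$. $\mathbf F$ is nonincreasing if $x\le y\Rightarrow\mathbf F_y\subseteq\mathbf F_x$; splittable if incomparable nodes have disjoint leaves; locally strict if each non-maximal $\mathbf F_x$ is the union of the pairwise disjoint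 family $(\mathbf F_s)_{s\in\mathrm{sons}(x)}$; complete if it has a node and every branch has nonempty fruit; has strict branches if it has a node and every branch has singleton fruit; open in $X$ if all leaves are open in $X$. A foliage graft for nonincreasing $\mathbf F$ is a nonincreasing foliage tree $\mathbf G$ such that $\mathrm{skel}\,\mathbf G$ is a graft for $\mathrm{skel}\,\mathbf F$, $\mathbf G_{0_{\mathbf G}}\subseteq\mathbf F_{0_{\mathbf G}}$, and $\mathbf G_m=\mathbf F_m$ for all $m\in\max\mathbf G$; $\mathrm{cut}(\mathbf F,\mathbf G)=\mathbf F_{0_{\mathbf G}}\setminus\mathbf G_{0_{\mathbf G}}$. $\varphi$ is a consistent family of foliage grafts for $\mathbf F$ if each member is a foliage graft for $\mathbf F$, distinct members have distinct skeletons, and $\{\mathrm{skel}\,\mathbf G:\mathbf G\in\varphi\}$ is a consistent family of grafts for $\mathrm{skel}\,\mathbf F$; $\mathrm{loss}(\mathbf F,\varphi)=\bigcup_{\mathbf G\in\varphi}\mathrm{cut}(\mathbf F,\mathbf G)$; $\mathrm{supp}(\mathbf F,\varphi)=\mathrm{supp}(\mathrm{skel}\,\mathbf F,\{\mathrm{skel}\,\mathbf G:\mathbf G\in\varphi\})$. The foliage hybrid $\mathrm{fhybr}(\mathbf F,\varphi)$ is the foliage tree $\mathbf H$ with skeleton $\mathrm{hybr}(\mathrm{skel}\,\mathbf F,\{\mathrm{skel}\,\mathbf G:\mathbf G\in\varphi\})$ and leaves $\mathbf H_x=\mathbf G_x\setminus\mathrm{loss}(\mathbf F,\varphi)$ if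 $x\in\mathrm{impl}\,\mathbf G$ for some $\mathbf G\in\varphi$, and $\mathbf H_x=\mathbf F_x\setminus\mathrm{loss}(\mathbf F,\varphi)$ if $x\in\mathrm{supp}(\mathbf F,\varphi)$. *)

From Stdlib Require Import Classical.
Set Implicit Arguments.

(* Nodes of all trees live in a common universe type U; a tree is a pair
   (Q, <) with Q : U -> Prop its node set and < a relation on Q. *)
Record tree (U : Type) := mkTree { nodes : U -> Prop ; lt : U -> U -> Prop }.
Arguments mkTree {U}.

Section Trees.
Variable U : Type.
Implicit Types T G D E : tree U.

Definition le T (x y : U) : Prop := lt T x y \/ (x = y /\ nodes T x).

Definition incomparable T (x y : U) : Prop :=
  nodes T x /\ nodes T y /\ ~ le T x y /\ ~ le T y x.

Definition is_tree T : Prop :=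
  (forall x y, lt T x y -> nodes T x /\ nodes T y) /\
  (forall x, ~ lt T x x) /\
  (forall x y z, lt T x y -> lt T y z -> lt T x z) /\
  (forall x, nodes T x ->
     (forall a b, lt T a x -> lt T b x -> a = b \/ lt T a b \/ lt T b a) /\
     (forall S : U -> Prop, (forall s, S s -> lt T s x) -> (exists s, S s) ->
        exists m, S m /\ forall s, S s -> m = s \/ lt T m s)).

Definition is_max T (x : U) : Prop := nodes T x /\ forall y, ~ lt T x y.
Definition is_least T (x : U) : Prop := nodes T x /\ forall y, nodes T y -> le T x y.
Definition is_son T (x s : U) : Prop :=
  lt T x s /\ forall y, ~ (lt T x y /\ lt T y s).

Definition is_chain T (C : U -> Prop) : Prop :=
  (forall c, C c -> nodes T c) /\
  (forall a b, C a -> C b -> a = b \/ lt T a b \/ lt T b a).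
Definition is_branch T (C : U -> Prop) : Prop :=
  is_chain T C /\ forall C2 : U -> Prop, is_chain T C2 -> (forall c, C c -> C2 c) -> forall d, C2 d -> C d.
Definition bounded_chains T : Prop :=
  forall C, is_chain T C -> (exists c, C c) ->
    exists u, nodes T u /\ forall c, C c -> le T c u.

Definition antichain T (A : U -> Prop) : Prop :=
  forall a b, A a -> A b -> a <> b -> incomparable T a b.

Definition down T (A : U -> Prop) (v : U) : Prop := exists a, A a /\ le T a v.

Definition impl G (x : U) : Prop := nodes G x /\ ~ is_least G x /\ ~ is_max G x.

Definition is_graft T G : Prop :=
  is_tree G /\
  (exists a b, nodes G a /\ nodes G b /\ a <> b) /\
  (exists z, is_least G z /\ nodes T z /\
     (forall m, is_max G m -> nodes T m /\ lt T z m)) /\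
  antichain T (is_max G) /\
  (forall x, impl G x -> ~ nodes T x).

Definition expl T G (v : U) : Prop :=
  (exists z, is_least G z /\ lt T z v) /\ ~ down T (is_max G) v.

Definition consistent_grafts T (gamma : tree U -> Prop) : Prop :=
  (forall G, gamma G -> is_graft T G) /\
  (forall D E, gamma D -> gamma E -> D <> E -> forall x, impl D x -> ~ impl E x) /\
  (forall D E, gamma D -> gamma E -> D <> E ->
     forall zD zE, is_least D zD -> is_least E zE ->
       incomparable T zD zE \/ down T (is_max E) zD \/ down T (is_max D) zE).

Definition supp T (gamma : tree U -> Prop) (x : U) : Prop :=
  nodes T x /\ ~ exists G, gamma G /\ expl T G x.

Definition hybr T (gamma : tree U -> Prop) : tree U :=
  mkTree
    (fun x => supp T gamma x \/ exists G, gamma G /\ impl G x)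
    (fun x y =>
       (supp T gamma x /\ supp T gamma y /\ lt T x y) \/
       (exists G, gamma G /\ impl G x /\ impl G y /\ lt G x y) \/
       (exists G, gamma G /\ supp T gamma x /\ impl G y /\
                   exists z, is_least G z /\ le T x z) \/
       (exists G, gamma G /\ impl G x /\ supp T gamma y /\
                   down T (is_max G) y /\
                   exists r, is_max G r /\ le T r y /\ lt G x r) \/
       (exists D E, gamma D /\ gamma E /\ D <> E /\ impl D x /\ impl E y /\
                   exists zE, is_least E zE /\ down T (is_max D) zE /\
                   exists r, is_max D r /\ le T r zE /\ lt D x r)).
End Trees.

Record ftree (U P : Type) := mkFtree { skel : tree U ; leaf : U -> P -> Prop }.
Arguments mkFtree {U P}.

Section Foliage.
Variables U P : Type.
Implicit Types F G H : ftree U P.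

Definition fnodes F := nodes (skel F).

Definition fruit F (A : U -> Prop) (p : P) : Prop := forall x, A x -> leaf F x p.

Definition nonincreasing F : Prop :=
  forall x y, le (skel F) x y -> forall p, leaf F y p -> leaf F x p.

Definition splittable F : Prop :=
  forall x y, incomparable (skel F) x y -> forall p, ~ (leaf F x p /\ leaf F y p).

Definition locally_strict F : Prop :=
  forall x, fnodes F x -> ~ is_max (skel F) x ->
    (forall p, leaf F x p <-> exists s, is_son (skel F) x s /\ leaf F s p) /\
    (forall s s', is_son (skel F) x s -> is_son (skel F) x s' -> s <> s' ->
       forall p, ~ (leaf F s p /\ leaf F s' p)).

Definition complete F : Prop :=
  (exists x, fnodes F x) /\
  forall C, is_branch (skel F) C -> exists p, fruit F C p.

Definition strict_branches F : Prop :=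
  (exists x, fnodes F x) /\
  forall C, is_branch (skel F) C -> exists p, forall q, fruit F C q <-> q = p.

Definition is_topology (opens : (P -> Prop) -> Prop) : Prop :=
  opens (fun _ => True) /\ opens (fun _ => False) /\
  (forall S : (P -> Prop) -> Prop, (forall A, S A -> opens A) ->
     opens (fun p => exists A, S A /\ A p)) /\
  (forall A B, opens A -> opens B -> opens (fun p => A p /\ B p)).

Definition open_in (opens : (P -> Prop) -> Prop) F : Prop :=
  forall x, fnodes F x -> opens (leaf F x).

Definition open_in_subspace (opens : (P -> Prop) -> Prop) (L : P -> Prop) F : Prop :=
  forall x, fnodes F x ->
    exists O, opens O /\ forall p, leaf F x p <-> (O p /\ ~ L p).

Definition is_fgraft F G : Prop :=
  is_tree (skel G) /\ nonincreasing G /\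
  is_graft (skel F) (skel G) /\
  (forall z, is_least (skel G) z -> forall p, leaf G z p -> leaf F z p) /\
  (forall m, is_max (skel G) m -> forall p, leaf G m p <-> leaf F m p).

Definition cut F G (p : P) : Prop :=
  exists z, is_least (skel G) z /\ leaf F z p /\ ~ leaf G z p.

Definition skels (phi : ftree U P -> Prop) (T : tree U) : Prop :=
  exists G, phi G /\ skel G = T.

Definition consistent_fgrafts F (phi : ftree U P -> Prop) : Prop :=
  (forall G, phi G -> is_fgraft F G) /\
  (forall G1 G2, phi G1 -> phi G2 -> G1 <> G2 -> skel G1 <> skel G2) /\
  consistent_grafts (skel F) (skels phi).

Definition loss F (phi : ftree U P -> Prop) (p : P) : Prop :=
  exists G, phi G /\ cut F G p.

Definition fsupp F (phi : ftree U P -> Prop) : U -> Prop :=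
  supp (skel F) (skels phi).

Definition fhybr F (phi : ftree U P -> Prop) : ftree U P :=
  mkFtree (hybr (skel F) (skels phi))
    (fun x p =>
       ((exists G, phi G /\ impl (skel G) x /\ leaf G x p) \/
        (fsupp F phi x /\ leaf F x p)) /\ ~ loss F phi p).
End Foliage.

(** A node of the hybrid is either a support node of F or an implant of a
    graft G, and an implant x of G lies in the hybrid strictly above 0_G and
    strictly below every support node lying above the maximal node of G that
    dominates x in G.  Hence every comparison in the hybrid is witnessed by a
    comparison in F or in a single graft, and leaves only shrink along such
    comparisons, which gives (a), (b) and (e).  The sons of a node in the
    hybrid are its sons in the graft it belongs to (for implants and roots of
    grafts) or its sons in F (for the other support nodes), which gives (c).
    For (d), a branch C of the hybrid is shadowed by the set of nodes of F
    lying below a support node of C.  Since chains of grafts are bounded, C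
    cannot stay inside a graft once it enters it: it leaves through a maximal
    node of that graft, which is a support node.  This makes the shadow a
    branch of F, and its fruit, minus the loss, is the fruit of C. *)

From Stdlib Require Import Classical.
Set Implicit Arguments.
Unset Strict Implicit.

Section TreeFacts.
Variable U : Type.
Variable G : tree U.
Hypothesis HG : is_tree G.

Lemma tree_lt_nodes x y : lt G x y -> nodes G x /\ nodes G y.
Proof. destruct HG as [h _]. auto. Qed.

Lemma tree_lt_irrefl x : ~ lt G x x.
Proof. destruct HG as [_ [h _]]. auto. Qed.

Lemma tree_lt_trans x y z : lt G x y -> lt G y z -> lt G x z.
Proof. destruct HG as [_ [_ [h _]]]. eauto. Qed.

Lemma tree_lt_below_total x a b : lt G a x -> lt G b x -> a = b \/ lt G a b \/ lt G b a.
Proof.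
  intros Ha Hb. destruct HG as [_ [_ [_ h]]].
  destruct (h x (proj2 (tree_lt_nodes Ha))) as [h1 _]. auto.
Qed.

Lemma tree_le_lt_trans x y z : le G x y -> lt G y z -> lt G x z.
Proof. intros [h|[-> _]] h2; [eapply tree_lt_trans; eauto | auto]. Qed.

Lemma tree_lt_le_trans x y z : lt G x y -> le G y z -> lt G x z.
Proof. intros h [h2|[<- _]]; [eapply tree_lt_trans; eauto | auto]. Qed.

Lemma tree_le_trans x y z : le G x y -> le G y z -> le G x z.
Proof. intros [h|[-> _]] h2; auto. left. eapply tree_lt_le_trans; eauto. Qed.

Lemma tree_lt_le_incl x y : lt G x y -> le G x y.
Proof. left; auto. Qed.

Lemma tree_le_refl x : nodes G x -> le G x x.
Proof. right; auto. Qed.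

Lemma tree_le_nodes_l x y : le G x y -> nodes G x.
Proof. intros [h|[_ h]]; [apply (tree_lt_nodes h) | auto]. Qed.

Lemma tree_le_below_total x a b : le G a x -> le G b x -> a = b \/ lt G a b \/ lt G b a.
Proof.
  intros [Ha|[-> _]] [Hb|[-> _]]; auto.
  apply tree_lt_below_total with x; auto.
Qed.

Lemma tree_le_lt_asym x y : le G x y -> lt G y x -> False.
Proof. intros h1 h2. apply (tree_lt_irrefl (tree_le_lt_trans h1 h2)). Qed.

Lemma least_unique z z' : is_least G z -> is_least G z' -> z = z'.
Proof.
  intros [n1 h1] [n2 h2].
  destruct (h1 z' n2) as [l1|[e _]]; auto.
  destruct (h2 z n1) as [l2|[e _]]; auto.
  exfalso; apply (tree_lt_irrefl (tree_lt_trans l1 l2)).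
Qed.

Lemma least_lt z n : is_least G z -> nodes G n -> n <> z -> lt G z n.
Proof. intros [_ h] hn ne. destruct (h n hn) as [l|[e _]]; auto. congruence. Qed.

Lemma least_le z n : is_least G z -> nodes G n -> le G z n.
Proof. intros [_ h] hn. auto. Qed.

Lemma not_lt_least z n : is_least G z -> lt G n z -> False.
Proof.
  intros hz hl. apply (tree_le_lt_asym (least_le hz (proj1 (tree_lt_nodes hl))) hl).
Qed.

Lemma max_not_lt r y : is_max G r -> ~ lt G r y.
Proof. intros [_ h]. auto. Qed.

Lemma not_incomparable_le x y :
  nodes G x -> nodes G y -> ~ incomparable G x y -> le G x y \/ le G y x.
Proof. intros hx hy h. apply NNPP. intro c. apply h. unfold incomparable. tauto. Qed.

Lemma impl_node x : impl G x -> nodes G x.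
Proof. intros [h _]; auto. Qed.

Lemma least_lt_impl z x : is_least G z -> impl G x -> lt G z x.
Proof. intros hz [hn [hl _]]. apply (least_lt hz hn). intro e; subst; auto. Qed.

Lemma lt_impl_or_max a n : lt G a n -> impl G n \/ is_max G n.
Proof.
  intros l. destruct (classic (is_max G n)); auto. left.
  split; [apply (tree_lt_nodes l)|]. split; auto.
  intro hl. apply (not_lt_least hl l).
Qed.

Lemma between_impl a y s : lt G a y -> lt G y s -> impl G y.
Proof.
  intros l1 l2. split; [apply (tree_lt_nodes l1)|]. split.
  - intro hl. apply (not_lt_least hl l1).
  - intro hm. apply (max_not_lt hm l2).
Qed.

(* Bound the chain, and step once more if the bound is itself an implant. *)
Lemma impl_chain_strict_ub X c : bounded_chains G -> is_chain G X -> X c ->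
  (forall y, X y -> impl G y) ->
  exists w, (impl G w \/ is_max G w) /\ forall y, X y -> lt G y w.
Proof.
  intros hB chX hc hX.
  destruct (hB X chX (ex_intro _ c hc)) as [u [hu hub]].
  destruct (classic (is_max G u)) as [hm|nm].
  - exists u. split; auto. intros y hy. destruct (hub y hy) as [l|[<- _]]; auto.
    destruct (hX y hy) as [_ [_ nmy]]. contradiction.
  - assert (exists v, lt G u v) as [v lv].
    { apply NNPP; intro nv. apply nm. split; auto. intros v lv. apply nv; eauto. }
    exists v. split.
    + apply (lt_impl_or_max lv).
    + intros y hy. apply (tree_le_lt_trans (hub y hy) lv).
Qed.

(* The node is the least node below d bounding B from above, or d itself. *)
Lemma down_closed_preds_of (B : U -> Prop) d : (forall s t, B t -> lt G s t -> B s) ->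
  nodes G d -> (forall b, B b -> lt G b d) ->
  exists t0, nodes G t0 /\ (forall b, B b -> lt G b t0) /\ (forall s, lt G s t0 -> B s).
Proof.
  intros hdc hd hbd.
  assert (key : forall t0, (forall b, B b -> lt G b t0) ->
            (forall s, lt G s t0 -> ~ forall b, B b -> lt G b s) ->
            forall s, lt G s t0 -> B s).
  { intros t0 hb0 hmin s ls. apply NNPP; intro nb.
    apply (hmin s ls). intros b hb.
    destruct (tree_lt_below_total (hb0 b hb) ls) as [<-|[l|l]]; auto.
    - contradiction.
    - exfalso; apply nb. apply (hdc s b hb l). }
  set (S := fun s => lt G s d /\ forall b, B b -> lt G b s).
  destruct (classic (exists s, S s)) as [ex|nex].
  - destruct HG as [_ [_ [_ hw]]]. destruct (hw d hd) as [_ wo].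
    destruct (wo S (fun s hs => proj1 hs) ex) as [m [[lm ubm] hm]].
    exists m. split; [apply (tree_lt_nodes lm)|]. split; auto.
    apply key; auto. intros s ls ubs.
    destruct (hm s (conj (tree_lt_trans ls lm) ubs)) as [<-|l].
    + apply (tree_lt_irrefl ls).
    + apply (tree_lt_irrefl (tree_lt_trans ls l)).
  - exists d. split; auto. split; auto. apply key; auto.
    intros s ls ubs. apply nex. exists s. split; auto.
Qed.

End TreeFacts.

Section Grafts.
Variable U : Type.
Variables T E : tree U.
Hypothesis HT : is_tree T.
Hypothesis HE : is_graft T E.

Lemma graft_tree : is_tree E.
Proof. apply HE. Qed.

Lemma graft_root_exists : exists z, is_least E z /\ nodes T z.
Proof. destruct HE as [_ [_ [[z [hz [hn _]]] _]]]. eauto. Qed.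

Lemma graft_root_node z : is_least E z -> nodes T z.
Proof.
  intros hz. destruct HE as [ht [_ [[z' [hz' [hn _]]] _]]].
  rewrite (least_unique ht hz hz'). auto.
Qed.

Lemma graft_root_lt_max z m : is_least E z -> is_max E m -> lt T z m.
Proof.
  intros hz hm. destruct HE as [ht [_ [[z' [hz' [hn hh]]] _]]].
  rewrite (least_unique ht hz hz'). apply hh; auto.
Qed.

Lemma graft_max_node m : is_max E m -> nodes T m.
Proof. intros hm. destruct HE as [_ [_ [[z' [_ [_ hh]]] _]]]. apply hh; auto. Qed.

Lemma graft_impl_not_node x : impl E x -> ~ nodes T x.
Proof. destruct HE as [_ [_ [_ [_ hh]]]]. auto. Qed.

Lemma graft_max_le_eq a b : is_max E a -> is_max E b -> le T a b -> a = b.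
Proof.
  intros ha hb hl. destruct HE as [_ [_ [_ [ha' _]]]].
  apply NNPP; intro ne. destruct (ha' a b ha hb ne) as [_ [_ [c _]]]. auto.
Qed.

Lemma graft_max_not_lt a b : is_max E a -> is_max E b -> ~ lt T a b.
Proof.
  intros ha hb hl. pose proof (graft_max_le_eq ha hb (tree_lt_le_incl hl)). subst.
  apply (tree_lt_irrefl HT hl).
Qed.

Lemma graft_max_below_unique a b y : is_max E a -> is_max E b -> le T a y -> le T b y -> a = b.
Proof.
  intros ha hb la lb. destruct (tree_le_below_total HT la lb) as [e|[l|l]]; auto.
  - destruct (graft_max_not_lt ha hb l).
  - destruct (graft_max_not_lt hb ha l).
Qed.

Lemma graft_root_lt_some z : is_least E z -> exists n, lt E z n.
Proof.
  intros hz. destruct HE as [ht [[a [b [na [nb ne]]]] _]].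
  destruct (classic (a = z)) as [e|e].
  - subst. exists b. apply (least_lt hz nb). auto.
  - exists a. apply (least_lt hz na e).
Qed.

End Grafts.

Section Hybrid.
Variable U : Type.
Variable T : tree U.
Variable gamma : tree U -> Prop.
Hypothesis HT : is_tree T.
Hypothesis HC : consistent_grafts T gamma.
Hypothesis HB : forall E, gamma E -> bounded_chains E.
#[local] Set Default Proof Using "Type HT HC".

Notation H := (hybr T gamma).
Notation hlt := (lt (hybr T gamma)).
Notation sp := (supp T gamma).

Lemma graft_of E : gamma E -> is_graft T E.
Proof. destruct HC as [h _]; auto. Qed.

Lemma impl_graft_unique D E x : gamma D -> gamma E -> impl D x -> impl E x -> D = E.
Proof.
  intros hD hE h1 h2. apply NNPP; intro ne.
  destruct HC as [_ [h _]]. apply (h D E hD hE ne x h1 h2).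
Qed.

Lemma graft_roots_consistent D E zD zE :
  gamma D -> gamma E -> D <> E -> is_least D zD -> is_least E zE ->
  incomparable T zD zE \/ down T (is_max E) zD \/ down T (is_max D) zE.
Proof. intros. destruct HC as [_ [_ h]]. auto. Qed.

Lemma root_graft_unique D E z : gamma D -> gamma E -> is_least D z -> is_least E z -> D = E.
Proof.
  intros hD hE h1 h2. apply NNPP; intro ne.
  destruct (graft_roots_consistent hD hE ne h1 h2) as [[_ [_ [c _]]]|[[a [ha hl]]|[a [ha hl]]]].
  - apply c. apply tree_le_refl. apply (graft_root_node (graft_of hD) h1).
  - apply (tree_le_lt_asym HT hl (graft_root_lt_max (graft_of hE) h2 ha)).
  - apply (tree_le_lt_asym HT hl (graft_root_lt_max (graft_of hD) h1 ha)).
Qed.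

Lemma root_below_root_max E x D z : gamma E -> is_least E x -> gamma D -> is_least D z ->
  lt T x z -> exists rE, is_max E rE /\ le T rE z.
Proof.
  intros hE hx hD hz l.
  assert (ne : D <> E).
  { intro e; subst. rewrite (least_unique (graft_tree (graft_of hE)) hx hz) in l.
    apply (tree_lt_irrefl HT l). }
  destruct (graft_roots_consistent hD hE ne hz hx) as [[_ [_ [_ c]]]|[[a [ha hl]]|[a [ha hl]]]].
  - destruct (c (tree_lt_le_incl l)).
  - eauto.
  - exfalso. apply (tree_lt_irrefl HT
      (tree_lt_trans HT (tree_lt_le_trans HT (graft_root_lt_max (graft_of hD) hz ha) hl) l)).
Qed.

Lemma supp_node x : sp x -> nodes T x.
Proof. intros [h _]; auto. Qed.

Lemma impl_not_supp E x : gamma E -> impl E x -> ~ sp x.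
Proof. intros h hi hs. apply (graft_impl_not_node (graft_of h) hi (supp_node hs)). Qed.

Lemma root_supp E z : gamma E -> is_least E z -> sp z.
Proof.
  intros hE hz. split; [apply (graft_root_node (graft_of hE) hz)|].
  intros [D [hD [[zD [hzD hl]] nd]]].
  destruct (root_below_root_max hD hzD hE hz hl) as [r [hr hrz]].
  apply nd. exists r; auto.
Qed.

Lemma max_supp E r : gamma E -> is_max E r -> sp r.
Proof.
  intros hE hr. split; [apply (graft_max_node (graft_of hE) hr)|].
  intros [D [hD [[zD [hzD hl]] nd]]].
  destruct (graft_root_exists (graft_of hE)) as [zE [hzE _]].
  pose proof (graft_root_lt_max (graft_of hE) hzE hr) as zr.
  destruct (classic (D = E)) as [<-|ne].
  - apply nd. exists r. split; auto. apply tree_le_refl. apply (graft_max_node (graft_of hD) hr).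
  - destruct (graft_roots_consistent hD hE ne hzD hzE)
      as [[_ [_ [c1 c2]]]|[[a [ha hl2]]|[a [ha hl2]]]].
    + destruct (tree_lt_below_total HT hl zr) as [<-|[l|l]].
      * apply c1. apply tree_le_refl. apply (graft_root_node (graft_of hD) hzD).
      * apply c1; left; auto.
      * apply c2; left; auto.
    + apply (graft_max_not_lt HT (graft_of hE) ha hr (tree_le_lt_trans HT hl2 hl)).
    + apply nd. exists a. split; auto. apply (tree_le_trans HT hl2 (tree_lt_le_incl zr)).
Qed.

Lemma supp_above_root_max c G z : sp c -> gamma G -> is_least G z -> lt T z c ->
  exists r, is_max G r /\ le T r c.
Proof.
  intros [hn hs] hG hz hl. apply NNPP; intro c1. apply hs. exists G. split; auto.
  split; [eauto|]. intros [r [h1 h2]]. apply c1; eauto.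
Qed.

Lemma hybr_node_cases x : nodes H x -> sp x \/ exists E, gamma E /\ impl E x.
Proof. auto. Qed.

Lemma hybr_node_supp x : sp x -> nodes H x.
Proof. simpl; auto. Qed.

Lemma hybr_node_impl E x : gamma E -> impl E x -> nodes H x.
Proof. simpl; eauto. Qed.

Lemma hybr_lt_of_supp x y : sp x -> sp y -> lt T x y -> hlt x y.
Proof. simpl; auto. Qed.

Lemma hybr_lt_of_impl E x y : gamma E -> impl E x -> impl E y -> lt E x y -> hlt x y.
Proof. intros. simpl. right; left. eauto 6. Qed.

Lemma hybr_lt_supp_impl E x y z :
  gamma E -> impl E y -> is_least E z -> sp x -> le T x z -> hlt x y.
Proof. intros. simpl. right; right; left. exists E. eauto 7. Qed.

Lemma hybr_lt_impl_supp G x y r :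
  gamma G -> impl G x -> sp y -> is_max G r -> le T r y -> lt G x r -> hlt x y.
Proof.
  intros hG hx hy hr hry hxr. simpl. right; right; right; left.
  exists G. do 3 (split; [auto|]). split; exists r; auto.
Qed.

Lemma hybr_lt_impl_impl E D x y z r : gamma E -> impl E y -> is_least E z ->
  gamma D -> impl D x -> is_max D r -> le T r z -> lt D x r -> hlt x y.
Proof.
  intros hE hy hz hD hx hr hrz hxr. simpl. right; right; right; right.
  assert (ne : D <> E).
  { intros <-. apply (tree_le_lt_asym HT hrz (graft_root_lt_max (graft_of hD) hz hr)). }
  exists D, E. do 5 (split; [auto|]). exists z. split; [auto|]. split; exists r; auto.
Qed.

Lemma hybr_lt_root_impl E z y : gamma E -> is_least E z -> impl E y -> hlt z y.
Proof.
  intros hE hz hy. pose proof (root_supp hE hz) as zs.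
  apply (hybr_lt_supp_impl hE hy hz zs (tree_le_refl (supp_node zs))).
Qed.

Lemma hybr_lt_of_graft_lt G x w : gamma G -> impl G x \/ is_least G x -> lt G x w -> hlt x w.
Proof.
  intros hG hx hl. destruct (lt_impl_or_max (graft_tree (graft_of hG)) hl) as [hw|hw].
  - destruct hx as [hx|hx].
    + apply (hybr_lt_of_impl hG hx hw hl).
    + apply (hybr_lt_root_impl hG hx hw).
  - pose proof (max_supp hG hw) as ws. destruct hx as [hx|hx].
    + apply (hybr_lt_impl_supp hG hx ws hw (tree_le_refl (supp_node ws)) hl).
    + apply (hybr_lt_of_supp (root_supp hG hx) ws (graft_root_lt_max (graft_of hG) hx hw)).
Qed.

Lemma hybr_lt_target x y : hlt x y -> sp y \/ exists E, gamma E /\ impl E y.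
Proof.
  intros [[_ [h _]]|[[G [hG [_ [h _]]]]|[[G [hG [_ [h _]]]]|
         [[G [hG [_ [h _]]]]|[D [E [_ [hE [_ [_ [h _]]]]]]]]]]]; eauto.
Qed.

Lemma hybr_lt_supp_inv x y : sp y -> hlt x y ->
  (sp x /\ lt T x y) \/
  (exists G, gamma G /\ impl G x /\ exists r, is_max G r /\ le T r y /\ lt G x r).
Proof.
  intros hy [[h1 [_ h3]]|[[G [hG [_ [hi _]]]]|[[G [hG [_ [hi _]]]]|
            [[G [hG [hi [_ [_ hr]]]]]|[D [E [_ [hE [_ [_ [hi _]]]]]]]]]]].
  - auto.
  - destruct (impl_not_supp hG hi hy).
  - destruct (impl_not_supp hG hi hy).
  - right; eauto.
  - destruct (impl_not_supp hE hi hy).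
Qed.

Lemma hybr_lt_impl_inv x y E z : gamma E -> impl E y -> is_least E z -> hlt x y ->
  (impl E x /\ lt E x y) \/ (sp x /\ le T x z) \/
  (exists D, gamma D /\ impl D x /\ exists r, is_max D r /\ le T r z /\ lt D x r).
Proof.
  intros hE hy hz [[_ [h2 _]]|[[G [hG [h1 [h2 h3]]]]|[[G [hG [h1 [h2 [z' [hz' hl]]]]]]|
                  [[G [hG [_ [h2 _]]]]|[D [E' [hD [hE' [_ [hx [hy' [zE [hzE [_ [r hr]]]]]]]]]]]]]]].
  - destruct (impl_not_supp hE hy h2).
  - rewrite (impl_graft_unique hG hE h2 hy) in *. auto.
  - rewrite (impl_graft_unique hG hE h2 hy) in *.
    rewrite (least_unique (graft_tree (graft_of hE)) hz' hz) in hl. auto.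
  - destruct (impl_not_supp hE hy h2).
  - rewrite (impl_graft_unique hE' hE hy' hy) in *.
    rewrite (least_unique (graft_tree (graft_of hE)) hzE hz) in hr.
    right; right. exists D; split; auto. split; auto. exists r. tauto.
Qed.

Lemma supp_lt_of_hybr_lt x y : sp x -> sp y -> hlt x y -> lt T x y.
Proof.
  intros hx hy h. destruct (hybr_lt_supp_inv hy h) as [[_ l]|[G [hG [hi _]]]]; auto.
  destruct (impl_not_supp hG hi hx).
Qed.

Lemma impl_lt_of_hybr_lt G a b : gamma G -> impl G a -> impl G b -> hlt a b -> lt G a b.
Proof.
  intros hG ha hb h. destruct (graft_root_exists (graft_of hG)) as [z [hz _]].
  destruct (hybr_lt_impl_inv hG hb hz h) as [[_ l]|[[hs _]|[D [hD [hi [r [hr [hl _]]]]]]]]; auto.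
  - destruct (impl_not_supp hG ha hs).
  - rewrite (impl_graft_unique hD hG hi ha) in hr.
    exfalso. apply (tree_le_lt_asym HT hl (graft_root_lt_max (graft_of hG) hz hr)).
Qed.

Lemma hybr_le_root x E z y : gamma E -> impl E y -> is_least E z ->
  (sp x /\ le T x z) \/
  (exists D, gamma D /\ impl D x /\ exists r, is_max D r /\ le T r z /\ lt D x r) ->
  x = z \/ hlt x z.
Proof.
  intros hE hy hz [[hs [l|[e _]]]|[D [hD [hi [r [hr [hl l]]]]]]]; auto.
  - right. apply hybr_lt_of_supp; auto. apply (root_supp hE hz).
  - right. apply (hybr_lt_impl_supp hD hi (root_supp hE hz) hr hl l).
Qed.

Lemma hybr_lt_trans_supp x y w : sp w -> hlt x y -> hlt y w -> hlt x w.
Proof.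
  intros hw h1 h2.
  destruct (hybr_lt_supp_inv hw h2) as [[hy l]|[G [hG [hi [r [hr [hl l]]]]]]].
  - destruct (hybr_lt_supp_inv hy h1) as [[hx l2]|[D [hD [hi2 [r2 [hr2 [hl2 l2]]]]]]].
    + apply hybr_lt_of_supp; auto. eapply tree_lt_trans; eauto.
    + apply (hybr_lt_impl_supp hD hi2 hw hr2); auto. eapply tree_le_trans; eauto. left; auto.
  - destruct (graft_root_exists (graft_of hG)) as [z [hz _]].
    pose proof (graft_root_lt_max (graft_of hG) hz hr) as zr.
    destruct (hybr_lt_impl_inv hG hi hz h1)
      as [[hx l2]|[[hx l2]|[D [hD [hi2 [r2 [hr2 [hl2 l2]]]]]]]].
    + apply (hybr_lt_impl_supp hG hx hw hr hl). apply (tree_lt_trans (graft_tree (graft_of hG)) l2 l).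
    + apply hybr_lt_of_supp; auto. eapply tree_le_lt_trans; eauto. eapply tree_lt_le_trans; eauto.
    + apply (hybr_lt_impl_supp hD hi2 hw hr2); auto. left. eapply tree_le_lt_trans; eauto.
      eapply tree_lt_le_trans; eauto.
Qed.

Lemma hybr_lt_trans x y w : hlt x y -> hlt y w -> hlt x w.
Proof.
  intros h1 h2. destruct (hybr_lt_target h2) as [hw|[E [hE hiw]]].
  - apply (hybr_lt_trans_supp hw h1 h2).
  - destruct (graft_root_exists (graft_of hE)) as [z [hz _]].
    destruct (hybr_lt_impl_inv hE hiw hz h2) as [[hy l]|[[hy l]|[D [hD [hi [r [hr [hl l]]]]]]]].
    + destruct (hybr_lt_impl_inv hE hy hz h1)
        as [[hx l2]|[[hx l2]|[D [hD [hi2 [r2 [hr2 [hl2 l2]]]]]]]].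
      * apply (hybr_lt_of_impl hE hx hiw). apply (tree_lt_trans (graft_tree (graft_of hE)) l2 l).
      * apply (hybr_lt_supp_impl hE hiw hz hx l2).
      * apply (hybr_lt_impl_impl hE hiw hz hD hi2 hr2 hl2 l2).
    + destruct (hybr_lt_supp_inv hy h1) as [[hx l2]|[D [hD [hi2 [r2 [hr2 [hl2 l2]]]]]]].
      * apply (hybr_lt_supp_impl hE hiw hz hx). left. eapply tree_lt_le_trans; eauto.
      * apply (hybr_lt_impl_impl hE hiw hz hD hi2 hr2); auto. eapply tree_le_trans; eauto.
    + destruct (graft_root_exists (graft_of hD)) as [zD [hzD _]].
      pose proof (graft_root_lt_max (graft_of hD) hzD hr) as zr.
      destruct (hybr_lt_impl_inv hD hi hzD h1)
        as [[hx l2]|[[hx l2]|[D' [hD' [hi2 [r2 [hr2 [hl2 l2]]]]]]]].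
      * apply (hybr_lt_impl_impl hE hiw hz hD hx hr hl).
        apply (tree_lt_trans (graft_tree (graft_of hD)) l2 l).
      * apply (hybr_lt_supp_impl hE hiw hz hx). left.
        eapply tree_le_lt_trans; eauto. eapply tree_lt_le_trans; eauto.
      * apply (hybr_lt_impl_impl hE hiw hz hD' hi2 hr2); auto. left.
        eapply tree_le_lt_trans; eauto. eapply tree_lt_le_trans; eauto.
Qed.

Lemma hybr_below_supp_impl_total a b y G r : sp y -> sp a -> lt T a y ->
  gamma G -> impl G b -> is_max G r -> le T r y -> lt G b r -> hlt a b \/ hlt b a.
Proof.
  intros hy ha l hG hb hr hl l2.
  destruct (graft_root_exists (graft_of hG)) as [z [hz _]].
  pose proof (graft_root_lt_max (graft_of hG) hz hr) as zr.
  destruct (tree_le_below_total HT (tree_lt_le_incl l) (tree_lt_le_incl (tree_lt_le_trans HT zr hl)))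
    as [<-|[l3|l3]].
  - left. apply (hybr_lt_root_impl hG hz hb).
  - left. apply (hybr_lt_supp_impl hG hb hz ha). left; auto.
  - right. destruct (supp_above_root_max ha hG hz l3) as [r' [hr' hl']].
    rewrite (graft_max_below_unique HT (graft_of hG) hr' hr (tree_le_trans HT hl' (tree_lt_le_incl l)) hl)
      in hl'.
    apply (hybr_lt_impl_supp hG hb ha hr hl' l2).
Qed.

Lemma hybr_below_supp_total a b y : sp y -> hlt a y -> hlt b y -> a = b \/ hlt a b \/ hlt b a.
Proof.
  intros hy h1 h2.
  destruct (hybr_lt_supp_inv hy h1) as [[ha l]|[G [hG [hia [r [hr [hl l]]]]]]];
  destruct (hybr_lt_supp_inv hy h2) as [[hb l2]|[G2 [hG2 [hib [r2 [hr2 [hl2 l2]]]]]]].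
  - destruct (tree_lt_below_total HT l l2) as [e|[l3|l3]]; auto.
    + right; left; apply hybr_lt_of_supp; auto.
    + right; right; apply hybr_lt_of_supp; auto.
  - right. apply (hybr_below_supp_impl_total hy ha l hG2 hib hr2 hl2 l2).
  - right. destruct (hybr_below_supp_impl_total hy hb l2 hG hia hr hl l); auto.
  - destruct (classic (G = G2)) as [<-|ne].
    + rewrite (graft_max_below_unique HT (graft_of hG) hr hr2 hl hl2) in l.
      destruct (tree_lt_below_total (graft_tree (graft_of hG)) l l2) as [e|[l3|l3]]; auto.
      * right; left. apply (hybr_lt_of_impl hG hia hib l3).
      * right; right. apply (hybr_lt_of_impl hG hib hia l3).
    + destruct (graft_root_exists (graft_of hG)) as [z [hz _]].
      destruct (graft_root_exists (graft_of hG2)) as [z2 [hz2 _]].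
      pose proof (tree_lt_le_trans HT (graft_root_lt_max (graft_of hG) hz hr) hl) as zy.
      pose proof (tree_lt_le_trans HT (graft_root_lt_max (graft_of hG2) hz2 hr2) hl2) as z2y.
      destruct (graft_roots_consistent hG hG2 ne hz hz2)
        as [[_ [_ [c1 c2]]]|[[a' [ha' hl']]|[a' [ha' hl']]]].
      * exfalso. destruct (tree_lt_below_total HT zy z2y) as [<-|[l4|l4]].
        -- apply c1. apply tree_le_refl. apply (graft_root_node (graft_of hG) hz).
        -- apply c1; left; auto.
        -- apply c2; left; auto.
      * rewrite (graft_max_below_unique HT (graft_of hG2) ha' hr2
                   (tree_le_trans HT hl' (tree_lt_le_incl zy)) hl2) in hl'.
        right; right. apply (hybr_lt_impl_impl hG hia hz hG2 hib hr2 hl' l2).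
      * rewrite (graft_max_below_unique HT (graft_of hG) ha' hr
                   (tree_le_trans HT hl' (tree_lt_le_incl z2y)) hl) in hl'.
        right; left. apply (hybr_lt_impl_impl hG2 hib hz2 hG hia hr hl' l).
Qed.

Lemma hybr_lt_below_total a b y : hlt a y -> hlt b y -> a = b \/ hlt a b \/ hlt b a.
Proof.
  intros h1 h2. destruct (hybr_lt_target h1) as [hy|[E [hE hiy]]].
  - apply (hybr_below_supp_total hy h1 h2).
  - destruct (graft_root_exists (graft_of hE)) as [z [hz _]].
    pose proof (root_supp hE hz) as zs.
    destruct (hybr_lt_impl_inv hE hiy hz h1) as [[ha l]|ra];
    destruct (hybr_lt_impl_inv hE hiy hz h2) as [[hb l2]|rb].
    + destruct (tree_lt_below_total (graft_tree (graft_of hE)) l l2) as [e|[l3|l3]]; auto.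
      * right; left; apply (hybr_lt_of_impl hE ha hb l3).
      * right; right; apply (hybr_lt_of_impl hE hb ha l3).
    + right; right. pose proof (hybr_lt_root_impl hE hz ha) as za.
      destruct (hybr_le_root hE hiy hz rb) as [<-|l3]; auto. apply (hybr_lt_trans l3 za).
    + right; left. pose proof (hybr_lt_root_impl hE hz hb) as zb.
      destruct (hybr_le_root hE hiy hz ra) as [<-|l3]; auto. apply (hybr_lt_trans l3 zb).
    + destruct (hybr_le_root hE hiy hz ra) as [<-|l3];
      destruct (hybr_le_root hE hiy hz rb) as [<-|l4]; auto.
      apply (hybr_below_supp_total zs l3 l4).
Qed.

Lemma branch_total C a b : is_branch H C -> C a -> C b -> a = b \/ hlt a b \/ hlt b a.
Proof. intros [[_ h] _]. auto. Qed.

Lemma branch_nodes C a : is_branch H C -> C a -> nodes H a.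
Proof. intros [[h _] _]. auto. Qed.

Lemma branch_maximal C h : is_branch H C -> nodes H h ->
  (forall c, C c -> c = h \/ hlt c h \/ hlt h c) -> C h.
Proof.
  intros [[hn hc] hmax] hh hcmp.
  apply (hmax (fun x => C x \/ x = h)); auto.
  split.
  - intros c [hc1|<-]; auto.
  - intros a b [ha|<-] [hb|<-]; auto.
    destruct (hcmp b hb) as [<-|[l|l]]; auto.
Qed.

Lemma branch_down_closed C y r : is_branch H C -> C y -> nodes H r -> hlt r y -> C r.
Proof.
  intros hbr hy hr lry. apply (branch_maximal hbr hr).
  intros w hw. destruct (branch_total hbr hw hy) as [<-|[l|l]].
  - auto.
  - destruct (hybr_lt_below_total l lry) as [e|[l2|l2]]; auto.
  - right; right. apply (hybr_lt_trans lry l).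
Qed.

Lemma graft_lt_of_hybr_lt E x y : gamma E -> impl E x \/ is_least E x ->
  impl E y \/ is_max E y -> hlt x y -> lt E x y.
Proof.
  intros hE [hx|hx] [hy|hy] hxy.
  - apply (impl_lt_of_hybr_lt hE hx hy hxy).
  - destruct (hybr_lt_supp_inv (max_supp hE hy) hxy) as [[xs _]|[G [hG [hi [r [hr [hl l]]]]]]].
    + destruct (impl_not_supp hE hx xs).
    + rewrite (impl_graft_unique hG hE hi hx) in hr, l.
      rewrite <- (graft_max_le_eq (graft_of hE) hr hy hl). auto.
  - apply (least_lt_impl hx hy).
  - apply (least_lt hx (proj1 hy)). intros ->.
    apply (tree_lt_irrefl HT (graft_root_lt_max (graft_of hE) hx hy)).
Qed.

Lemma hybr_lt_exit_graft E x y : gamma E -> impl E x \/ is_least E x -> hlt x y -> ~ impl E y ->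
  exists r, is_max E r /\ lt E x r /\ (r = y \/ hlt r y).
Proof.
  intros hE [hx|hx] hxy hy.
  - destruct (hybr_lt_target hxy) as [ys|[D [hD hiy]]].
    + destruct (hybr_lt_supp_inv ys hxy) as [[xs _]|[G [hG [hi [r [hr [hl l]]]]]]].
      * destruct (impl_not_supp hE hx xs).
      * rewrite (impl_graft_unique hG hE hi hx) in hr, l. exists r. split; auto. split; auto.
        destruct hl as [hl|[e _]]; auto. right. apply hybr_lt_of_supp; auto.
        apply (max_supp hE hr).
    + destruct (graft_root_exists (graft_of hD)) as [zD [hzD _]].
      destruct (hybr_lt_impl_inv hD hiy hzD hxy)
        as [[hi l]|[[xs _]|[G [hG [hi [r [hr [hl l]]]]]]]].
      * rewrite (impl_graft_unique hD hE hi hx) in hiy. contradiction.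
      * destruct (impl_not_supp hE hx xs).
      * rewrite (impl_graft_unique hG hE hi hx) in hr, l. exists r. split; auto. split; auto.
        right. apply (hybr_lt_supp_impl hD hiy hzD (max_supp hE hr) hl).
  - pose proof (root_supp hE hx) as xs.
    assert (below_max : forall r, is_max E r -> lt E x r).
    { intros r hr. apply (least_lt hx (proj1 hr)). intros ->.
      apply (tree_lt_irrefl HT (graft_root_lt_max (graft_of hE) hx hr)). }
    destruct (hybr_lt_target hxy) as [ys|[D [hD hiy]]].
    + destruct (supp_above_root_max ys hE hx (supp_lt_of_hybr_lt xs ys hxy)) as [r [hr hry]].
      exists r. split; auto. split; auto.
      destruct hry as [l|[e _]]; auto. right. apply (hybr_lt_of_supp (max_supp hE hr) ys l).
    + destruct (graft_root_exists (graft_of hD)) as [zD [hzD _]].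
      destruct (hybr_lt_impl_inv hD hiy hzD hxy) as [[hi _]|[[_ [l|[<- _]]]|[G [hG [hi _]]]]].
      * destruct (impl_not_supp hD hi xs).
      * destruct (root_below_root_max hE hx hD hzD l) as [r [hr hrz]].
        exists r. split; auto. split; auto. right.
        apply (hybr_lt_supp_impl hD hiy hzD (max_supp hE hr) hrz).
      * rewrite (root_graft_unique hD hE hzD hx) in hiy. contradiction.
      * destruct (impl_not_supp hG hi xs).
Qed.

Lemma hybr_lt_enter_graft E z y s : gamma E -> is_least E z -> impl E s \/ is_max E s ->
  hlt y s -> ~ impl E y -> y = z \/ hlt y z.
Proof.
  intros hE hz [hs|hs] hys hy.
  - apply (hybr_le_root hE hs hz).
    destruct (hybr_lt_impl_inv hE hs hz hys) as [[hi _]|h]; [contradiction|exact h].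
  - pose proof (root_supp hE hz) as zs.
    pose proof (graft_root_lt_max (graft_of hE) hz hs) as zr.
    destruct (hybr_lt_supp_inv (max_supp hE hs) hys)
      as [[ys l]|[D [hD [hiy [r [hr [hl l]]]]]]].
    + destruct (tree_lt_below_total HT l zr) as [<-|[l2|l2]]; auto.
      * right. apply (hybr_lt_of_supp ys zs l2).
      * exfalso. destruct (supp_above_root_max ys hE hz l2) as [r [hr hry]].
        apply (graft_max_not_lt HT (graft_of hE) hr hs (tree_le_lt_trans HT hry l)).
    + right. destruct (graft_root_exists (graft_of hD)) as [zD [hzD _]].
      pose proof (tree_lt_le_trans HT (graft_root_lt_max (graft_of hD) hzD hr) hl) as zDs.
      destruct (tree_lt_below_total HT zDs zr) as [<-|[l2|l2]].
      * rewrite (root_graft_unique hD hE hzD hz) in hiy. contradiction.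
      * destruct (root_below_root_max hD hzD hE hz l2) as [r' [hr' hr'z]].
        rewrite (graft_max_below_unique HT (graft_of hD) hr' hr
                   (tree_le_trans HT hr'z (tree_lt_le_incl zr)) hl) in hr'z.
        apply (hybr_lt_impl_supp hD hiy zs hr hr'z l).
      * destruct (root_below_root_max hE hz hD hzD l2) as [rE [hrE lrE]].
        destruct (graft_max_not_lt HT (graft_of hE) hrE hs (tree_le_lt_trans HT lrE zDs)).
Qed.

(* Convexity: the hybrid cannot leave E between two nodes of E, since it would
   have to pass a maximal node of E and come back below the root of E. *)
Lemma hybr_between_graft E x y s : gamma E -> impl E x \/ is_least E x ->
  impl E s \/ is_max E s -> hlt x y -> hlt y s -> impl E y.
Proof.
  intros hE hx hs hxy hys. apply NNPP; intro hy.
  destruct (graft_root_exists (graft_of hE)) as [z [hz _]].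
  destruct (hybr_lt_exit_graft hE hx hxy hy) as [r [hr [_ hry]]].
  pose proof (graft_root_lt_max (graft_of hE) hz hr) as zr.
  assert (hrz : r = z \/ hlt r z).
  { destruct (hybr_lt_enter_graft hE hz hs hys hy) as [<-|hyz];
      destruct hry as [<-|hry]; auto.
    - right. apply (hybr_lt_trans hry hyz). }
  destruct hrz as [<-|hrz].
  - apply (tree_lt_irrefl HT zr).
  - apply (tree_lt_irrefl HT (tree_lt_trans HT zr
      (supp_lt_of_hybr_lt (max_supp hE hr) (root_supp hE hz) hrz))).
Qed.

Lemma graft_son_hybr E x s : gamma E -> impl E x \/ is_least E x -> is_son E x s ->
  is_son H x s.
Proof.
  intros hE hx [lxs nint].
  pose proof (lt_impl_or_max (graft_tree (graft_of hE)) lxs) as hs.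
  split; [apply (hybr_lt_of_graft_lt hE hx lxs)|].
  intros y [hxy hys]. pose proof (hybr_between_graft hE hx hs hxy hys) as hy.
  apply (nint y). split.
  - apply (graft_lt_of_hybr_lt hE hx (or_introl hy) hxy).
  - apply (graft_lt_of_hybr_lt hE (or_introl hy) hs hys).
Qed.

Lemma hybr_son_graft E x s : gamma E -> impl E x \/ is_least E x -> is_son H x s ->
  is_son E x s.
Proof.
  intros hE hx [lxs nint].
  assert (hs : impl E s \/ is_max E s).
  { destruct (classic (impl E s)) as [hs|hs]; auto.
    destruct (hybr_lt_exit_graft hE hx lxs hs) as [r [hr [lxr [<-|hrs]]]]; auto.
    exfalso. apply (nint r). split; auto. apply (hybr_lt_of_graft_lt hE hx lxr). }
  split; [apply (graft_lt_of_hybr_lt hE hx hs lxs)|].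
  intros y [l1 l2]. apply (nint y).
  pose proof (between_impl (graft_tree (graft_of hE)) l1 l2) as hy.
  split; [apply (hybr_lt_of_graft_lt hE hx l1)|apply (hybr_lt_of_graft_lt hE (or_introl hy) l2)].
Qed.

Lemma branch_has_above C z n : is_branch H C -> C z -> hlt z n -> exists y, C y /\ hlt z y.
Proof.
  intros hbr hz hzn. apply NNPP; intro nY. apply nY. exists n. split; auto.
  apply (branch_maximal hbr).
  - destruct (hybr_lt_target hzn) as [hn|[E [hE hn]]].
    + apply (hybr_node_supp hn).
    + apply (hybr_node_impl hE hn).
  - intros w hw. destruct (branch_total hbr hw hz) as [<-|[l|l]].
    + auto.
    + right; left. apply (hybr_lt_trans l hzn).
    + exfalso; apply nY; eauto.
Qed.

(* Otherwise the branch would stay inside G above c, and a strict upper bound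
   in G of that chain would extend it. *)
Lemma branch_leaves_impl C c G : is_branch H C -> C c -> gamma G -> impl G c ->
  exists r, is_max G r /\ lt G c r /\ C r.
Proof using HT HC HB.
  intros hbr hcC hG hic.
  pose proof (graft_tree (graft_of hG)) as tG.
  destruct (classic (exists y, C y /\ hlt c y /\ ~ impl G y)) as [[y [hyC [hcy hny]]]|nA].
  - destruct (hybr_lt_exit_graft hG (or_introl hic) hcy hny) as [r [hr [lcr [<-|hry]]]].
    + eauto.
    + exists r. split; auto. split; auto.
      apply (branch_down_closed hbr hyC (hybr_node_supp (max_supp hG hr)) hry).
  - exfalso.
    set (X := fun y => C y /\ (y = c \/ hlt c y)).
    assert (XG : forall y, X y -> impl G y).
    { intros y [hy [<-|l]]; auto. apply NNPP; intro; apply nA; eauto. }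
    assert (XGlt : forall a b, X a -> X b -> hlt a b -> lt G a b).
    { intros a b ha hb. apply (impl_lt_of_hybr_lt hG (XG a ha) (XG b hb)). }
    assert (chX : is_chain G X).
    { split.
      - intros y hy. apply impl_node. apply XG; auto.
      - intros a b ha hb. destruct (branch_total hbr (proj1 ha) (proj1 hb)) as [e|[l|l]]; auto. }
    destruct (impl_chain_strict_ub tG (HB hG) chX (conj hcC (or_introl eq_refl)) XG)
      as [w [hw hwub]].
    assert (hcw : hlt c w)
      by (apply (hybr_lt_of_graft_lt hG (or_introl hic) (hwub c (conj hcC (or_introl eq_refl))))).
    assert (Cw : C w).
    { apply (branch_maximal hbr).
      - destruct hw as [hw|hw].
        + apply (hybr_node_impl hG hw).
        + apply hybr_node_supp. apply (max_supp hG hw).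
      - intros z hz. right; left. destruct (branch_total hbr hz hcC) as [<-|[l|l]].
        + auto.
        + apply (hybr_lt_trans l hcw).
        + assert (xz : X z) by (split; auto).
          apply (hybr_lt_of_graft_lt hG (or_introl (XG z xz)) (hwub z xz)). }
    apply (tree_lt_irrefl tG (hwub w (conj Cw (or_intror hcw)))).
Qed.

Lemma branch_above_root C z E : is_branch H C -> C z -> gamma E -> is_least E z ->
  exists c, C c /\ sp c /\ lt T z c.
Proof using HT HC HB.
  intros hbr hz hE hzE.
  pose proof (root_supp hE hzE) as zs.
  destruct (graft_root_lt_some (graft_of hE) hzE) as [n ln].
  destruct (branch_has_above hbr hz (hybr_lt_of_graft_lt hE (or_intror hzE) ln)) as [y [hy l]].
  destruct (hybr_lt_target l) as [ys|[E' [hE' hiy]]].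
  - exists y. split; auto. split; auto. apply (supp_lt_of_hybr_lt zs ys l).
  - destruct (branch_leaves_impl hbr hy hE' hiy) as [r [hr [lr Cr]]].
    pose proof (max_supp hE' hr) as rs.
    exists r. split; auto. split; auto. apply (supp_lt_of_hybr_lt zs rs).
    apply (hybr_lt_trans l (hybr_lt_of_graft_lt hE' (or_introl hiy) lr)).
Qed.

Definition shadow (C : U -> Prop) (t : U) : Prop := exists c, C c /\ sp c /\ le T t c.

Lemma shadow_of_supp (C : U -> Prop) c : C c -> sp c -> shadow C c.
Proof. intros hc hs. exists c. split; auto. split; auto. apply tree_le_refl, supp_node, hs. Qed.

Lemma shadow_down_closed C s t : shadow C t -> lt T s t -> shadow C s.
Proof.
  intros [c [hc [hs l]]] l2. exists c. split; auto. split; auto.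
  left. apply (tree_lt_le_trans HT l2 l).
Qed.

Lemma shadow_is_chain C : is_branch H C -> is_chain T (shadow C).
Proof.
  intros hbr. split.
  - intros t [c [_ [_ l]]]. apply (tree_le_nodes_l HT l).
  - intros a b [c [hc [hs l]]] [c' [hc' [hs' l']]].
    destruct (branch_total hbr hc hc') as [<-|[l2|l2]].
    + apply (tree_le_below_total HT l l').
    + pose proof (tree_lt_le_incl (supp_lt_of_hybr_lt hs hs' l2)) as cc'.
      apply (tree_le_below_total HT (tree_le_trans HT l cc') l').
    + pose proof (tree_lt_le_incl (supp_lt_of_hybr_lt hs' hs l2)) as c'c.
      apply (tree_le_below_total HT l (tree_le_trans HT l' c'c)).
Qed.

(* A support node t0 would belong to C, and an exploded t0 would have a
   maximal node of the exploding graft below it, inside the shadow. *)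
Lemma shadow_not_preds C t0 : is_branch H C -> nodes T t0 ->
  (forall b, shadow C b -> lt T b t0) -> ~ (forall s, lt T s t0 -> shadow C s).
Proof using HT HC HB.
  intros hbr ht0 ub0 pr0.
  destruct (classic (sp t0)) as [s0|ns0].
  - assert (Ct0 : C t0).
    { apply (branch_maximal hbr (hybr_node_supp s0)). intros z hz. right; left.
      destruct (hybr_node_cases (branch_nodes hbr hz)) as [zs|[G [hG hiz]]].
      - apply hybr_lt_of_supp; auto. apply ub0, shadow_of_supp; auto.
      - destruct (branch_leaves_impl hbr hz hG hiz) as [r [hr [l Cr]]].
        apply (hybr_lt_impl_supp hG hiz s0 hr); auto.
        left. apply ub0, shadow_of_supp; auto. apply (max_supp hG hr). }
    apply (tree_lt_irrefl HT (ub0 t0 (shadow_of_supp Ct0 s0))).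
  - assert (exists G, gamma G /\ expl T G t0) as [G [hG [[z [hz lz]] nd]]].
    { apply NNPP; intro nx. apply ns0. split; auto. }
    destruct (pr0 z lz) as [c [hc [hs lc]]].
    assert (exists c', C c' /\ sp c' /\ lt T z c') as [c' [hc' [hs' l']]].
    { destruct lc as [lc|[<- _]].
      - exists c; auto.
      - apply (branch_above_root hbr hc hG hz). }
    destruct (supp_above_root_max hs' hG hz l') as [r [hr lr]].
    apply nd. exists r. split; auto. left. apply (tree_le_lt_trans HT lr).
    apply ub0, shadow_of_supp; auto.
Qed.

Lemma shadow_is_branch C : is_branch H C -> is_branch T (shadow C).
Proof using HT HC HB.
  intros hbr. split; [apply (shadow_is_chain hbr)|].
  intros C2 [hn2 hc2] hsub d hd.
  apply NNPP; intro nBd.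
  assert (ubd : forall b, shadow C b -> lt T b d).
  { intros b hb. destruct (hc2 b d (hsub b hb) hd) as [<-|[l|l]].
    - contradiction.
    - auto.
    - exfalso; apply nBd. apply (shadow_down_closed hb l). }
  destruct (down_closed_preds_of HT (fun s t hb l => shadow_down_closed hb l) (hn2 d hd) ubd)
    as [t0 [ht0 [ub0 pr0]]].
  apply (shadow_not_preds hbr ht0 ub0 pr0).
Qed.

Lemma hybr_nonempty x : nodes T x -> exists h, nodes H h.
Proof.
  intros hx. destruct (classic (sp x)) as [s|ns].
  - exists x. apply hybr_node_supp; auto.
  - assert (exists G, gamma G /\ expl T G x) as [G [hG [[z0 [hz0 lz]] nd]]].
    { apply NNPP; intro nx. apply ns. split; auto. }
    exists z0. apply hybr_node_supp. apply (root_supp hG hz0).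
Qed.

Section PlainNodes.
Variable x : U.
Hypothesis xs : sp x.
Hypothesis not_root : forall E, gamma E -> ~ is_least E x.
#[local] Set Default Proof Using "Type HT HC xs not_root".

Lemma plain_lt_root_of_lt_impl D y zD : gamma D -> impl D y -> is_least D zD -> hlt x y ->
  lt T x zD.
Proof.
  intros hD hy hzD hxy.
  destruct (hybr_lt_impl_inv hD hy hzD hxy) as [[hi _]|[[_ [l|[<- _]]]|[G [hG [hi _]]]]].
  - destruct (impl_not_supp hD hi xs).
  - auto.
  - destruct (not_root hD hzD).
  - destruct (impl_not_supp hG hi xs).
Qed.

Lemma plain_son_supp s : is_son T x s -> sp s.
Proof.
  intros [l nint]. split; [apply (tree_lt_nodes HT l)|]. intros [G [hG [[z [hz lz]] nd]]].
  destruct (tree_lt_below_total HT lz l) as [<-|[l2|l2]].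
  - apply (not_root hG hz).
  - destruct (supp_above_root_max xs hG hz l2) as [r [hr hl]]. apply nd. exists r.
    split; auto. left. apply (tree_le_lt_trans HT hl l).
  - apply (nint z). auto.
Qed.

Lemma plain_son_hybr s : is_son T x s -> is_son H x s.
Proof.
  intros hs. pose proof (plain_son_supp hs) as ss. destruct hs as [l nint].
  split; [apply hybr_lt_of_supp; auto|].
  intros y [h1 h2].
  destruct (hybr_lt_target h1) as [ys|[D [hD hiy]]].
  - apply (nint y). split; [apply (supp_lt_of_hybr_lt xs ys h1)|apply (supp_lt_of_hybr_lt ys ss h2)].
  - destruct (graft_root_exists (graft_of hD)) as [zD [hzD _]].
    pose proof (plain_lt_root_of_lt_impl hD hiy hzD h1) as lxz.
    destruct (hybr_lt_supp_inv ss h2) as [[ys _]|[G [hG [hi [r [hr [hl _]]]]]]].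
    + apply (impl_not_supp hD hiy ys).
    + rewrite (impl_graft_unique hG hD hi hiy) in hr.
      apply (nint zD). split; auto.
      apply (tree_lt_le_trans HT (graft_root_lt_max (graft_of hD) hzD hr) hl).
Qed.

Lemma hybr_son_plain s : is_son H x s -> is_son T x s.
Proof.
  intros [l nint].
  destruct (hybr_lt_target l) as [ss|[D [hD his]]].
  - split; [apply (supp_lt_of_hybr_lt xs ss l)|].
    intros y [l1 l2].
    destruct (classic (sp y)) as [ys|nys].
    + apply (nint y). split; apply hybr_lt_of_supp; auto.
    + assert (exists G, gamma G /\ expl T G y) as [G [hG [[z [hz lz]] nd]]].
      { apply NNPP; intro nx. apply nys. split; [apply (tree_lt_nodes HT l1)|auto]. }
      destruct (tree_lt_below_total HT lz l1) as [<-|[l3|l3]].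
      * destruct (not_root hG hz).
      * destruct (supp_above_root_max xs hG hz l3) as [r [hr hl]]. apply nd. exists r.
        split; auto. left. apply (tree_le_lt_trans HT hl l1).
      * apply (nint z). pose proof (root_supp hG hz) as zs.
        split; apply hybr_lt_of_supp; auto. apply (tree_lt_trans HT lz l2).
  - exfalso. destruct (graft_root_exists (graft_of hD)) as [zD [hzD _]].
    pose proof (plain_lt_root_of_lt_impl hD his hzD l) as lxz.
    apply (nint zD). split.
    + apply hybr_lt_of_supp; auto. apply (root_supp hD hzD).
    + apply (hybr_lt_root_impl hD hzD his).
Qed.

Lemma plain_not_max : ~ is_max H x -> ~ is_max T x.
Proof.
  intros nm [_ hm]. apply nm. split; [apply hybr_node_supp; auto|].
  intros y l. destruct (hybr_lt_target l) as [ys|[D [hD hiy]]].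
  - apply (hm y (supp_lt_of_hybr_lt xs ys l)).
  - destruct (graft_root_exists (graft_of hD)) as [zD [hzD _]].
    apply (hm zD (plain_lt_root_of_lt_impl hD hiy hzD l)).
Qed.

End PlainNodes.
End Hybrid.

Definition strict_at U P (F : ftree U P) x : Prop :=
  (forall p, leaf F x p <-> exists s, is_son (skel F) x s /\ leaf F s p) /\
  (forall s s', is_son (skel F) x s -> is_son (skel F) x s' -> s <> s' ->
     forall p, ~ (leaf F s p /\ leaf F s' p)).

Lemma strict_at_transfer U P (F1 F2 : ftree U P) (L : P -> Prop) x :
  (forall s, is_son (skel F1) x s <-> is_son (skel F2) x s) ->
  (forall y p, y = x \/ is_son (skel F2) x y -> (leaf F1 y p <-> leaf F2 y p /\ ~ L p)) ->
  strict_at F2 x -> strict_at F1 x.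
Proof.
  intros hs hl [up dj]. split.
  - intros p. rewrite (hl x p (or_introl eq_refl)). split.
    + intros [h nl]. destruct (proj1 (up p) h) as [s [ss hsp]].
      exists s. split; [apply hs; auto|]. apply (hl s p (or_intror ss)). auto.
    + intros [s [ss hsp]]. apply hs in ss. apply (hl s p (or_intror ss)) in hsp.
      destruct hsp as [hsp nl]. split; auto. apply up. eauto.
  - intros s s' ss ss' ne p [h h']. apply hs in ss. apply hs in ss'.
    apply (hl s p (or_intror ss)) in h. apply (hl s' p (or_intror ss')) in h'.
    apply (dj s s' ss ss' ne p). tauto.
Qed.

Section FoliageGrafts.
Variables U P : Type.
Variables F G : ftree U P.
Hypothesis HG : is_fgraft F G.

Lemma fgraft_nonincreasing a b p : le (skel G) a b -> leaf G b p -> leaf G a p.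
Proof. intros l. destruct HG as [_ [hn _]]. apply (hn a b l). Qed.

Lemma fgraft_root_leaf z p : is_least (skel G) z -> leaf G z p -> leaf F z p.
Proof. intros hz. destruct HG as [_ [_ [_ [hh _]]]]. apply (hh z hz). Qed.

Lemma fgraft_max_leaf r p : is_max (skel G) r -> (leaf G r p <-> leaf F r p).
Proof. intros hr. destruct HG as [_ [_ [_ [_ hh]]]]. apply (hh r hr). Qed.

Lemma fgraft_leaf_root x z p : nodes (skel G) x -> is_least (skel G) z -> leaf G x p -> leaf F z p.
Proof.
  intros hx hz h. apply (fgraft_root_leaf hz). apply (fgraft_nonincreasing (least_le hz hx) h).
Qed.

Lemma fgraft_lt_max_of_leaf x r p : splittable G -> impl (skel G) x -> leaf G x p ->
  is_max (skel G) r -> leaf F r p -> lt (skel G) x r.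
Proof.
  intros sG hx lx hr lr. apply NNPP; intro nl.
  apply (sG x r) with p; [|split; auto; apply (fgraft_max_leaf p hr); auto].
  destruct hx as [nx [_ nmx]]. split; auto. split; [apply (proj1 hr)|]. split.
  - intros [l|[<- _]]; auto.
  - intros [l|[-> _]]; auto. apply (max_not_lt hr l).
Qed.

End FoliageGrafts.

Lemma splittable_le_total U P (F : ftree U P) a b p : splittable F ->
  fnodes F a -> fnodes F b -> leaf F a p -> leaf F b p -> le (skel F) a b \/ le (skel F) b a.
Proof.
  intros sF ha hb la lb. apply (not_incomparable_le ha hb). intro hi. apply (sF a b hi p); auto.
Qed.

Lemma splittable_branch_mem U P (F : ftree U P) B z p : splittable F ->
  is_branch (skel F) B -> (forall b, B b -> leaf F b p) -> fnodes F z -> leaf F z p -> B z.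
Proof.
  intros sF [[bn bc] bmax] hp hz fz. apply (bmax (fun t => B t \/ t = z)).
  - split.
    + intros c [hc|<-]; auto.
    + intros a b [ha|<-] [hb|<-]; auto.
      * destruct (splittable_le_total sF (bn a ha) hz (hp a ha) fz) as [[l|[<- _]]|[l|[-> _]]]; auto.
      * destruct (splittable_le_total sF hz (bn b hb) fz (hp b hb)) as [[l|[<- _]]|[l|[-> _]]]; auto.
  - auto.
  - auto.
Qed.

Section Foliage.
Variables U P : Type.
Variable F : ftree U P.
Variable phi : ftree U P -> Prop.
Hypothesis HT : is_tree (skel F).
Hypothesis HFn : nonincreasing F.
Hypothesis Hphi : consistent_fgrafts F phi.

Notation T := (skel F).
Notation gamma := (skels phi).
Notation H := (hybr (skel F) (skels phi)).
Notation hlt := (lt (hybr (skel F) (skels phi))).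
Notation sp := (supp (skel F) (skels phi)).
Notation leafH := (leaf (fhybr F phi)).

Let HC : consistent_grafts T gamma := proj2 (proj2 Hphi).

Lemma fgraft_of G : phi G -> is_fgraft F G.
Proof. apply (proj1 Hphi). Qed.

Lemma skels_of G : phi G -> gamma (skel G).
Proof. intros h. exists G; auto. Qed.

Lemma fgraft_skel_graft G : phi G -> is_graft T (skel G).
Proof. intros h. apply (graft_of HT HC (skels_of h)). Qed.

Lemma fgraft_skel_inj G1 G2 : phi G1 -> phi G2 -> skel G1 = skel G2 -> G1 = G2.
Proof.
  intros h1 h2 e. apply NNPP; intro ne. apply (proj1 (proj2 Hphi) G1 G2 h1 h2 ne e).
Qed.

Lemma F_nonincreasing a b p : le T a b -> leaf F b p -> leaf F a p.
Proof. intros l. apply (HFn l). Qed.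

Lemma hybr_leaf_supp x p : sp x -> (leafH x p <-> leaf F x p /\ ~ loss F phi p).
Proof.
  intros xs. simpl. split.
  - intros [[[G [hG [hi _]]]|[_ h]] hl]; auto.
    destruct (impl_not_supp HT HC (skels_of hG) hi xs).
  - intros [h hl]. split; auto.
Qed.

Lemma hybr_leaf_impl G x p : phi G -> impl (skel G) x ->
  (leafH x p <-> leaf G x p /\ ~ loss F phi p).
Proof.
  intros hG hi. simpl. split.
  - intros [[[G' [hG' [hi' h]]]|[xs _]] hl].
    + rewrite (fgraft_skel_inj hG' hG
                 (impl_graft_unique HT HC (skels_of hG') (skels_of hG) hi' hi)) in h.
      auto.
    + destruct (impl_not_supp HT HC (skels_of hG) hi xs).
  - intros [h hl]. split; eauto.
Qed.

Lemma fhybr_nonincreasing : nonincreasing (fhybr F phi).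
Proof.
  intros x y [l|[<- _]] p hy; auto.
  change (lt H x y) in l.
  destruct (hybr_lt_target HT HC l) as [ys|[E [[G [hG <-]] hiy]]].
  - destruct (proj1 (hybr_leaf_supp p ys) hy) as [fy nl].
    destruct (hybr_lt_supp_inv HT HC ys l)
      as [[xs l2]|[E [[G [hG <-]] [hi [r [hr [hl l2]]]]]]].
    + apply (hybr_leaf_supp p xs). split; auto. apply (F_nonincreasing (tree_lt_le_incl l2) fy).
    + apply (hybr_leaf_impl p hG hi). split; auto.
      apply (fgraft_nonincreasing (fgraft_of hG) (tree_lt_le_incl l2)).
      apply (fgraft_max_leaf (fgraft_of hG) p hr). apply (F_nonincreasing hl fy).
  - destruct (proj1 (hybr_leaf_impl p hG hiy) hy) as [gy nl].
    destruct (graft_root_exists (fgraft_skel_graft hG)) as [z [hz _]].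
    pose proof (fgraft_leaf_root (fgraft_of hG) (impl_node hiy) hz gy) as fz.
    destruct (hybr_lt_impl_inv HT HC (skels_of hG) hiy hz l)
      as [[hi l2]|[[xs l2]|[D [[G' [hG' <-]] [hi [r [hr [hl l2]]]]]]]].
    + apply (hybr_leaf_impl p hG hi). split; auto.
      apply (fgraft_nonincreasing (fgraft_of hG) (tree_lt_le_incl l2) gy).
    + apply (hybr_leaf_supp p xs). split; auto. apply (F_nonincreasing l2 fz).
    + apply (hybr_leaf_impl p hG' hi). split; auto.
      apply (fgraft_nonincreasing (fgraft_of hG') (tree_lt_le_incl l2)).
      apply (fgraft_max_leaf (fgraft_of hG') p hr). apply (F_nonincreasing hl fz).
Qed.

Lemma hybr_leaf_graft G x p : phi G -> nodes (skel G) x ->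
  (leafH x p <-> leaf G x p /\ ~ loss F phi p).
Proof.
  intros hG hx.
  destruct (classic (impl (skel G) x)) as [hi|ni]; [apply (hybr_leaf_impl p hG hi)|].
  destruct (classic (is_max (skel G) x)) as [hm|nm].
  - rewrite (hybr_leaf_supp p (max_supp HT HC (skels_of hG) hm)).
    rewrite (fgraft_max_leaf (fgraft_of hG) p hm). tauto.
  - assert (hz : is_least (skel G) x) by (apply NNPP; intro; apply ni; repeat split; auto).
    rewrite (hybr_leaf_supp p (root_supp HT HC (skels_of hG) hz)). split.
    + intros [fx nl]. split; auto. apply NNPP; intro gx. apply nl. exists G. split; auto. exists x; auto.
    + intros [gx nl]. split; auto. apply (fgraft_root_leaf (fgraft_of hG) hz gx).
Qed.

Section Splittable.
Hypothesis sF : splittable F.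
Hypothesis sG : forall G, phi G -> splittable G.

Lemma hybr_comparable_impl_supp G x y p : phi G -> impl (skel G) x -> sp y ->
  leafH x p -> leafH y p -> hlt x y \/ hlt y x.
Proof.
  intros hG hx ys lx ly.
  destruct (proj1 (hybr_leaf_impl p hG hx) lx) as [gx nl].
  destruct (proj1 (hybr_leaf_supp p ys) ly) as [fy _].
  destruct (graft_root_exists (fgraft_skel_graft hG)) as [z [hz nz]].
  pose proof (fgraft_leaf_root (fgraft_of hG) (impl_node hx) hz gx) as fz.
  destruct (splittable_le_total sF nz (supp_node HT HC ys) fz fy) as [[l|[<- _]]|l].
  - left. destruct (supp_above_root_max HT HC ys (skels_of hG) hz l) as [r [hr hl]].
    apply (hybr_lt_impl_supp HT HC (skels_of hG) hx ys hr hl).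
    apply (fgraft_lt_max_of_leaf (fgraft_of hG) (sG hG) hx gx hr (F_nonincreasing hl fy)).
  - right. apply (hybr_lt_root_impl HT HC (skels_of hG) hz hx).
  - right. apply (hybr_lt_supp_impl HT HC (skels_of hG) hx hz ys l).
Qed.

Lemma hybr_comparable_impl_impl G G' x y p : phi G -> phi G' -> G <> G' ->
  impl (skel G) x -> impl (skel G') y -> leafH x p -> leafH y p -> hlt x y \/ hlt y x.
Proof.
  intros hG hG' ne hx hy lx ly.
  destruct (proj1 (hybr_leaf_impl p hG hx) lx) as [gx nl].
  destruct (proj1 (hybr_leaf_impl p hG' hy) ly) as [gy _].
  destruct (graft_root_exists (fgraft_skel_graft hG)) as [z [hz nz]].
  destruct (graft_root_exists (fgraft_skel_graft hG')) as [z' [hz' nz']].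
  pose proof (fgraft_leaf_root (fgraft_of hG) (impl_node hx) hz gx) as fz.
  pose proof (fgraft_leaf_root (fgraft_of hG') (impl_node hy) hz' gy) as fz'.
  assert (ne' : skel G <> skel G') by (apply (proj1 (proj2 Hphi)); auto).
  destruct (graft_roots_consistent HT HC (skels_of hG) (skels_of hG') ne' hz hz')
    as [hi|[[a [ha hl]]|[a [ha hl]]]].
  - exfalso. apply (@sF z z' hi p). auto.
  - right. apply (hybr_lt_impl_impl HT HC (skels_of hG) hx hz (skels_of hG') hy ha hl).
    apply (fgraft_lt_max_of_leaf (fgraft_of hG') (sG hG') hy gy ha (F_nonincreasing hl fz)).
  - left. apply (hybr_lt_impl_impl HT HC (skels_of hG') hy hz' (skels_of hG) hx ha hl).
    apply (fgraft_lt_max_of_leaf (fgraft_of hG) (sG hG) hx gx ha (F_nonincreasing hl fz')).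
Qed.

Lemma hybr_comparable_of_leaf x y p : nodes H x -> nodes H y -> leafH x p -> leafH y p ->
  le H x y \/ le H y x.
Proof.
  intros hx hy lx ly.
  destruct (hybr_node_cases HT HC hx) as [xs|[E [[G [hG <-]] hix]]];
  destruct (hybr_node_cases HT HC hy) as [ys|[E' [[G' [hG' <-]] hiy]]].
  - apply (proj1 (hybr_leaf_supp p xs)) in lx. apply (proj1 (hybr_leaf_supp p ys)) in ly.
    destruct (splittable_le_total sF (supp_node HT HC xs) (supp_node HT HC ys) (proj1 lx) (proj1 ly))
      as [[l|[<- _]]|[l|[<- _]]].
    + left; left. apply (hybr_lt_of_supp HT HC xs ys l).
    + left; right; auto.
    + right; left. apply (hybr_lt_of_supp HT HC ys xs l).
    + right; right; auto.
  - destruct (hybr_comparable_impl_supp hG' hiy xs ly lx) as [l|l]; [right|left]; left; auto.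
  - destruct (hybr_comparable_impl_supp hG hix ys lx ly) as [l|l]; [left|right]; left; auto.
  - destruct (classic (G = G')) as [<-|ne].
    + apply (proj1 (hybr_leaf_impl p hG hix)) in lx. apply (proj1 (hybr_leaf_impl p hG hiy)) in ly.
      destruct (splittable_le_total (sG hG) (impl_node hix) (impl_node hiy) (proj1 lx) (proj1 ly))
        as [[l|[<- _]]|[l|[<- _]]].
      * left; left. apply (hybr_lt_of_impl HT HC (skels_of hG) hix hiy l).
      * left; right; auto.
      * right; left. apply (hybr_lt_of_impl HT HC (skels_of hG) hiy hix l).
      * right; right; auto.
    + destruct (hybr_comparable_impl_impl hG hG' ne hix hiy lx ly) as [l|l]; [left|right]; left; auto.
Qed.

Lemma fhybr_splittable : splittable (fhybr F phi).
Proof.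
  intros x y [hx [hy [n1 n2]]] p [lx ly].
  destruct (hybr_comparable_of_leaf hx hy lx ly); auto.
Qed.

End Splittable.

Lemma fhybr_open opens : open_in opens F -> (forall G, phi G -> open_in opens G) ->
  open_in_subspace opens (loss F phi) (fhybr F phi).
Proof.
  intros oF oG x hx. change (nodes H x) in hx.
  destruct (hybr_node_cases HT HC hx) as [xs|[E [[G [hG <-]] hix]]].
  - exists (leaf F x). split; [apply oF, (supp_node HT HC xs)|]. intros p. apply (hybr_leaf_supp p xs).
  - exists (leaf G x). split; [apply (oG G hG), (impl_node hix)|]. intros p. apply (hybr_leaf_impl p hG hix).
Qed.

Lemma graft_strict_at G x : phi G -> locally_strict G -> impl (skel G) x \/ is_least (skel G) x ->
  strict_at (fhybr F phi) x.
Proof.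
  intros hG lG hx. pose proof (graft_tree (fgraft_skel_graft hG)) as tG.
  apply (strict_at_transfer (F2 := G) (L := loss F phi)).
  - intros s. split.
    + apply (hybr_son_graft HT HC (skels_of hG) hx).
    + apply (graft_son_hybr HT HC (skels_of hG) hx).
  - intros y p hy. apply (hybr_leaf_graft p hG).
    destruct hy as [->|[l _]]; [|apply (tree_lt_nodes tG l)].
    destruct hx as [hx|hx]; [apply (impl_node hx)|apply (proj1 hx)].
  - destruct hx as [hx|hx].
    + apply (lG x (impl_node hx)). destruct hx as [_ [_ h]]. auto.
    + apply (lG x (proj1 hx)). intros hm.
      destruct (graft_root_lt_some (fgraft_skel_graft hG) hx) as [n ln]. apply (max_not_lt hm ln).
Qed.

Lemma plain_strict_at x : sp x -> (forall G, phi G -> ~ is_least (skel G) x) ->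
  strict_at F x -> strict_at (fhybr F phi) x.
Proof.
  intros xs nr. assert (nr' : forall E, gamma E -> ~ is_least E x) by (intros E [G [hG <-]]; auto).
  apply strict_at_transfer with (L := loss F phi).
  - intros s. split.
    + apply (hybr_son_plain HT HC xs nr').
    + apply (plain_son_hybr HT HC xs nr').
  - intros y p [<-|hy]; apply hybr_leaf_supp; auto. apply (plain_son_supp HT HC xs nr' hy).
Qed.

Lemma fhybr_locally_strict : locally_strict F -> (forall G, phi G -> locally_strict G) ->
  locally_strict (fhybr F phi).
Proof.
  intros lF lG x hx nm. change (nodes H x) in hx. change (~ is_max H x) in nm.
  destruct (hybr_node_cases HT HC hx) as [xs|[E [[G [hG <-]] hix]]].
  - destruct (classic (exists G, phi G /\ is_least (skel G) x)) as [[G [hG hzx]]|nr].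
    + apply (graft_strict_at hG (lG G hG) (or_intror hzx)).
    + assert (nr' : forall G, phi G -> ~ is_least (skel G) x) by eauto.
      apply (plain_strict_at xs nr'). apply (lF x (supp_node HT HC xs)).
      apply (plain_not_max HT HC xs); auto. intros E [G [hG <-]]; auto.
  - apply (graft_strict_at hG (lG G hG) (or_introl hix)).
Qed.

Section Branches.
Hypothesis sF : splittable F.
Hypothesis bc : forall G, phi G -> bounded_chains (skel G).

Let HB : forall E, gamma E -> bounded_chains E.
Proof. intros E [G [hG <-]]. auto. Qed.

(* The root of a graft cutting p would be in the shadow, and so would a maximal
   node of that graft, whose leaf contains p. *)
Lemma shadow_fruit_not_loss C p : is_branch H C -> (forall b, shadow T gamma C b -> leaf F b p) ->
  ~ loss F phi p.
Proof.
  intros hC hp [G [hG [z [hz [fz ngz]]]]].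
  pose proof (graft_root_node (fgraft_skel_graft hG) hz) as nz.
  destruct (splittable_branch_mem sF (shadow_is_branch HT HC HB hC) hp nz fz) as [c [hc [cs lc]]].
  assert (exists c', C c' /\ sp c' /\ lt T z c') as [c' [hc' [cs' l']]].
  { destruct lc as [lc|[<- _]].
    - exists c; auto.
    - apply (branch_above_root HT HC HB hC hc (skels_of hG) hz). }
  destruct (supp_above_root_max HT HC cs' (skels_of hG) hz l') as [r [hr hl]].
  apply ngz. apply (fgraft_nonincreasing (fgraft_of hG) (least_le hz (proj1 hr))).
  apply (fgraft_max_leaf (fgraft_of hG) p hr). apply hp. exists c'. auto.
Qed.

Lemma fhybr_fruit_of_shadow C p : is_branch H C ->
  (forall b, shadow T gamma C b -> leaf F b p) -> fruit (fhybr F phi) C p.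
Proof.
  intros hC hp. pose proof (shadow_fruit_not_loss hC hp) as nl.
  intros c hc. destruct (hybr_node_cases HT HC (branch_nodes HT HC hC hc)) as [cs|[E [[G [hG <-]] hic]]].
  - apply (proj2 (hybr_leaf_supp p cs)). split; auto. apply hp, shadow_of_supp; auto.
  - destruct (branch_leaves_impl HT HC HB hC hc (skels_of hG) hic) as [r [hr [l Cr]]].
    apply (proj2 (hybr_leaf_impl p hG hic)). split; auto.
    apply (fgraft_nonincreasing (fgraft_of hG) (tree_lt_le_incl l)).
    apply (fgraft_max_leaf (fgraft_of hG) p hr).
    apply hp, shadow_of_supp; auto. apply (max_supp HT HC (skels_of hG) hr).
Qed.

Lemma fhybr_complete : complete F -> complete (fhybr F phi).
Proof.
  intros [[x0 hx0] cF]. split; [apply (hybr_nonempty HT HC hx0)|].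
  intros C hC. destruct (cF _ (shadow_is_branch HT HC HB hC)) as [p hp].
  exists p. apply (fhybr_fruit_of_shadow hC hp).
Qed.

Lemma fhybr_strict_branches : strict_branches F -> strict_branches (fhybr F phi).
Proof.
  intros [[x0 hx0] cF]. split; [apply (hybr_nonempty HT HC hx0)|].
  intros C hC. destruct (cF _ (shadow_is_branch HT HC HB hC)) as [p hp].
  exists p. intros q. split.
  - intros hq. apply (proj1 (hp q)). intros b [c [hc [cs lc]]].
    apply (F_nonincreasing lc). apply (proj1 (hybr_leaf_supp q cs) (hq c hc)).
  - intros ->. apply (fhybr_fruit_of_shadow hC (proj2 (hp p) eq_refl)).
Qed.

End Branches.

End Foliage.

Theorem mainTheorem10 (U P : Type) (F : ftree U P) (phi : ftree U P -> Prop)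
  (HFtree : is_tree (skel F)) (HFnoninc : nonincreasing F)
  (Hphi : consistent_fgrafts F phi) :
  let H := fhybr F phi in
  (* (a) *) nonincreasing H /\
  (* (b) *) (splittable F -> (forall G, phi G -> splittable G) -> splittable H) /\
  (* (c) *) (locally_strict F -> (forall G, phi G -> locally_strict G) ->
             locally_strict H) /\
  (* (d) *) ((complete F -> splittable F ->
              (forall G, phi G -> bounded_chains (skel G)) -> complete H) /\
             (strict_branches F -> splittable F ->
              (forall G, phi G -> bounded_chains (skel G)) -> strict_branches H)) /\
  (* (e) *) (forall opens : (P -> Prop) -> Prop, is_topology opens ->
             open_in opens F -> (forall G, phi G -> open_in opens G) ->
             open_in_subspace opens (loss F phi) H).
Proof.
  intros H. split; [apply fhybr_nonincreasing; auto|].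
  split; [intros; apply fhybr_splittable; auto|].
  split; [apply fhybr_locally_strict; auto|].
  split; [split; intros; [apply fhybr_complete|apply fhybr_strict_branches]; auto|].
  intros opens _. apply fhybr_open; auto.
Qed.
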